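(* For every positive integer $t$, $md_t \geq \left\lceil \frac{t+1}{2} \right\rceil$. Equivalently, for every voter matrix $V$ with $t$ topics there is a proposal supported by $V$ that contains at least $\lceil (t+1)/2\rceil$ entries $Y$.
   Context: Let $t$ be a positive integer (the number of topics). A voter matrix with $t$ topics is a matrix $V\in\{Y,N\}^{n\times t}$ for some positive integer $n$ (the number of voters; rows are voters), subject to the standing assumption that in every column the number of entries $Y$ is at least the number of entries $N$ (so $Y$ is the majority opinion on every topic). $\mathcal{V}_t$ denotes the set of all voter matrices with $t$ topics and any number of voters. A proposal is a vector $p\in\{Y,N\}^t$. A voter (row) $v$ supports $p$ if the Hamming distance between $v$ and $p$ is at most $t/2$. A proposal $p$ is supported by $V$ if at least $n/2$ of the rows of $V$ support $p$. The number of majority decisions of a proposal is the number of topics on which it agrees with the majority opinion, i.e. its number of entries $Y$. For $V$, $md_V$ is the maximum number $m$ such that there exists a proposal supported by $V$ with $m$ majority decisions, and $md_t=\min_{V\in\mathcal{V}_t} md_V$. *)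

From mathcomp Require Import all_boot all_algebra.
Set Implicit Arguments. Unset Strict Implicit. Unset Printing Implicit Defensive.

(* Convention: entry Y is encoded as [true], entry N as [false].
   A voter matrix with n voters and t topics is a matrix 'M[bool]_(n, t)
   (rows = voters), a proposal is a row vector 'rV[bool]_t. *)

Definition colY n t (V : 'M[bool]_(n, t)) (j : 'I_t) : nat :=
  #|[set i : 'I_n | V i j]|.

(* standing assumption: Y is (weakly) the majority opinion on every topic *)
Definition voter_matrix n t (V : 'M[bool]_(n, t)) : Prop :=
  (0 < n)%N /\ forall j : 'I_t, (n <= 2 * colY V j)%N.

Definition hamming_row n t (V : 'M[bool]_(n, t)) (i : 'I_n) (p : 'rV[bool]_t) : nat :=
  #|[set j : 'I_t | V i j != p ord0 j]|.

Definition supports n t (V : 'M[bool]_(n, t)) (i : 'I_n) (p : 'rV[bool]_t) : bool :=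
  (2 * hamming_row V i p <= t)%N.

Definition supported n t (V : 'M[bool]_(n, t)) (p : 'rV[bool]_t) : bool :=
  (n <= 2 * #|[set i : 'I_n | supports V i p]|)%N.

Definition majority_decisions t (p : 'rV[bool]_t) : nat :=
  #|[set j : 'I_t | p ord0 j]|.

(* Let t = 2m+1 be odd and call a proposal major if it has at least m+1
   entries Y.  Count the pairs (voter v, major proposal p supported by v)
   weighted by #Y(p) - #N(p), i.e. as a sum over topics j of +1 or -1
   according to p_j.  For a fixed voter and topic j, flipping p_j (or, at the
   boundary, combining p with v by xor/xnor) injects the major proposals with
   p_j = N that v supports into those with p_j = Y, with room to spare for
   the T_j proposals having p_j = Y and exactly m+1 entries Y when v_j = Y.
   Since every column has a Y-majority, the total weight is at least n/2 times
   T = sum_j T_j.  If no major proposal were supported, each would have fewer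
   than n/2 supporters, bounding the weight by (n-1)/2 times the total excess
   of Y's over N's among major proposals, which is positive and at most T: a
   contradiction.  For even t, fix the first entry to Y and apply the odd case
   to the remaining t-1 topics. *)

From mathcomp Require Import all_boot all_algebra zify.
Set Implicit Arguments. Unset Strict Implicit. Unset Printing Implicit Defensive.

Local Notation md := majority_decisions.
Local Notation nays p := #|[set k | ~~ p ord0 k]|.

Lemma leq_card_can (T : finType) (A B : {pred T}) (f g : T -> T) :
  (forall x, x \in A -> f x \in B /\ g (f x) = x) -> #|A| <= #|B|.
Proof.
move=> fAB; have fK : {in A, cancel f g} by move=> x /fAB [].
rewrite -(card_in_image (can_in_inj fK)).
by apply/subset_leq_card/subsetP => _ /imageP [x /fAB [fxB _] ->].
Qed.

Lemma sum_card_exchange (I J : finType) (P : pred I) (Q : I -> pred J) :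
  \sum_(x | P x) #|[set y | Q x y]| = \sum_y #|[set x | P x && Q x y]|.
Proof.
under eq_bigr do rewrite -sum1dep_card.
under [RHS]eq_bigr do rewrite -sum1dep_card.
exact: exchange_big_dep.
Qed.

Lemma sum_card_mul_exchange (I J K : finType) (R : I -> pred J) (Q : J -> pred K) :
  \sum_y #|[set x | R x y]| * #|[set z | Q y z]|
  = \sum_x \sum_z #|[set y | R x y && Q y z]|.
Proof.
under eq_bigr do rewrite -sum_nat_cond_const.
rewrite (exchange_big_dep predT) //=.
by apply: eq_bigr => x _; rewrite sum_card_exchange.
Qed.

Lemma leq_rearrange a b x y : a <= b -> x <= y -> a * y + b * x <= a * x + b * y.
Proof. by move=> /subnK <- /subnK <-; nia. Qed.

Lemma card_lift0 t (P : pred 'I_t.+1) :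
  #|[set k | P k]| = P ord0 + #|[set k | P (lift ord0 k)]|.
Proof.
by rewrite -!sum1dep_card [LHS]big_mkcond [in RHS]big_mkcond big_ord_recl; case: (P ord0).
Qed.

Section Hamming.
Variable t : nat.
Implicit Types (u w : 'I_t -> bool) (p : 'rV[bool]_t) (j k : 'I_t).

Definition ham u p : nat := #|[set k | u k != p ord0 k]|.

Definition xorv w p : 'rV[bool]_t := \row_k (w k != p ord0 k).

Definition flip j : 'rV[bool]_t -> 'rV[bool]_t := xorv (pred1 j).

Lemma xorvE w p k : xorv w p ord0 k = (w k != p ord0 k).
Proof. exact: mxE. Qed.

Lemma xorvK w : involutive (xorv w).
Proof. by move=> p; apply/rowP=> k; rewrite !xorvE; case: (w k); case: (p ord0 k). Qed.

Lemma flipK j : involutive (flip j).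
Proof. exact: xorvK. Qed.

Lemma flipE j p k : flip j p ord0 k = ((k == j) != p ord0 k).
Proof. exact: xorvE. Qed.

Lemma flip_at j p : flip j p ord0 j = ~~ p ord0 j.
Proof. by rewrite flipE eqxx. Qed.

Lemma eq_ham u w p : u =1 w -> ham u p = ham w p.
Proof. by move=> uw; apply: eq_card => k; rewrite !inE uw. Qed.

Lemma ham_xorv u w p : ham u (xorv w p) = ham (fun k => u k != w k) p.
Proof.
apply: eq_card => k; rewrite !inE xorvE.
by case: (u k); case: (w k); case: (p ord0 k).
Qed.

Lemma ham_negv u p : ham u p + ham (fun k => ~~ u k) p = t.
Proof.
rewrite /ham -[RHS]card_ord -(cardsC [set k | u k != p ord0 k]); congr (_ + _).
by apply: eq_card => k; rewrite !inE; case: (u k); case: (p ord0 k).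
Qed.

Lemma ham_flip_eq u j p : u j = p ord0 j -> ham u (flip j p) = (ham u p).+1.
Proof.
move=> upj; rewrite /ham (cardsD1 j) inE flip_at upj.
rewrite (_ : _ != _ = true) ?add1n; last by case: (p ord0 j).
congr _.+1; apply: eq_card => k; rewrite !inE flipE.
by case: (eqVneq k j) => [->|_] /=; [rewrite upj eqxx | case: (p ord0 k)].
Qed.

Lemma ham_flip_neq u j p : u j != p ord0 j -> ham u p = (ham u (flip j p)).+1.
Proof.
move=> upj; rewrite -[in LHS](flipK j p) ham_flip_eq // flip_at.
by move: upj; case: (u j); case: (p ord0 j).
Qed.

Lemma mdE p : md p = ham (fun _ => false) p.
Proof. by apply: eq_card => k; rewrite !inE; case: (p ord0 k). Qed.

Lemma md_flip_N j p : ~~ p ord0 j -> md (flip j p) = (md p).+1.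
Proof. by move=> pjN; rewrite !mdE ham_flip_eq //; case: (p ord0 j) pjN. Qed.

Lemma md_flip_Y j p : p ord0 j -> md p = (md (flip j p)).+1.
Proof. by move=> pjY; rewrite !mdE -ham_flip_neq // pjY. Qed.

Lemma md_xorv w p : md (xorv w p) = ham w p.
Proof. by rewrite mdE ham_xorv; apply: eq_ham => k; case: (w k). Qed.

Lemma ham_xorv_self w p : ham w (xorv w p) = md p.
Proof. by rewrite mdE ham_xorv; apply: eq_ham => k; rewrite eqxx. Qed.

Lemma md_add_nays p : md p + nays p = t.
Proof.
rewrite -[RHS]card_ord -(cardsC [set k | p ord0 k]); congr (_ + _).
by apply: eq_card => k; rewrite !inE.
Qed.

End Hamming.

Section OddTopics.
Variable m : nat.
Local Notation t := m.*2.+1.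
Implicit Types (v : 'I_t -> bool) (p q : 'rV[bool]_t) (j : 'I_t).

Definition supports_major v p := (m < md p) && (ham v p <= m).

Definition tight_at j : {set 'rV[bool]_t} := [set p : 'rV_t | p ord0 j && (md p == m.+1)].

Lemma card_supports_major_N v j : ~~ v j ->
  #|[set p : 'rV_t | supports_major v p && ~~ p ord0 j]|
  <= #|[set p : 'rV_t | supports_major v p && p ord0 j]|.
Proof.
move=> vjN.
(* [g] undoes [f]: a flip yields at least m+2 entries Y, [xorv (~~ v)] exactly m+1. *)
apply: (leq_card_can
  (f := fun p : 'rV_t => if ham v p < m then flip j p else xorv (fun k => ~~ v k) p)
  (g := fun q : 'rV_t => if m.+1 < md q then flip j q else xorv (fun k => ~~ v k) q)).
move=> p; rewrite !inE /supports_major -!andbA => /and3P [mY mH pjN].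
case: (ltnP (ham v p) m) => [Hlt | Hge].
  have Hq : ham v (flip j p) = (ham v p).+1.
    by rewrite ham_flip_eq // (negbTE vjN) (negbTE pjN).
  rewrite flip_at pjN md_flip_N // Hq ifT ?flipK //; split=> //; apply/and3P; split=> //; lia.
have Yq : md (xorv (fun k => ~~ v k) p) = m.+1.
  by rewrite md_xorv; have := ham_negv v p; lia.
have Hq : ham v (xorv (fun k => ~~ v k) p) + md p = t.
  rewrite ham_xorv addnC -[RHS](md_add_nays p); congr (_ + _).
  by apply: eq_card => k; rewrite !inE; case: (v k).
rewrite Yq ltnn xorvK xorvE (negbTE vjN) /=; split=> //.
apply/and3P; split; [lia | lia | by case: (p ord0 j) pjN].
Qed.

Lemma card_supports_major_Y v j : v j ->
  #|[set p : 'rV_t | supports_major v p && ~~ p ord0 j]| + #|tight_at j|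
  <= #|[set p : 'rV_t | supports_major v p && p ord0 j]|.
Proof.
move=> vjY.
pose D := [set p : 'rV_t | if p ord0 j then md p == m.+1 else supports_major v p].
have -> : #|[set p : 'rV_t | supports_major v p && ~~ p ord0 j]| + #|tight_at j| = #|D|.
  rewrite -(cardsID [set p : 'rV_t | ~~ p ord0 j] D); congr (_ + _).
    by apply: eq_card => p; rewrite !inE; case: (p ord0 j); rewrite ?andbF.
  by apply: eq_card => p; rewrite !inE; case: (p ord0 j).
(* The three branches of [f] land in disjoint parts of the target: distance
   below m, exactly m+1 entries Y, and distance m with at least m+2 entries Y. *)
apply: (leq_card_can
  (f := fun p : 'rV_t => if ~~ p ord0 j then flip j p
                        else if ham v p <= m then p else flip j (xorv v p))
  (g := fun q : 'rV_t => if (m.+1 < md q) && (ham v q < m) then flip j q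
                        else if md q == m.+1 then q else xorv v (flip j q))).
move=> p; rewrite !inE /supports_major.
case: ifPn => [pjY /eqP mY | pjN /andP [mY mH]]; last first.
  have Hq : ham v p = (ham v (flip j p)).+1 by apply: ham_flip_neq; rewrite vjY.
  rewrite /= flip_at pjN md_flip_N // ifT ?flipK; last by apply/andP; split; lia.
  by split=> //; apply/andP; split=> //; lia.
case: (leqP (ham v p) m) => [mH | mH].
  by rewrite /= mH mY ltnn eqxx leqnn pjY.
have rjN : ~~ xorv v p ord0 j by rewrite xorvE vjY pjY.
have Yq := md_flip_N rjN; rewrite md_xorv in Yq.
have Hq : ham v (xorv v p) = (ham v (flip j (xorv v p))).+1.
  by apply: ham_flip_neq; rewrite vjY.
rewrite ham_xorv_self mY in Hq.
rewrite /= flip_at rjN Yq ifN; last by apply/nandP; right; lia.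
rewrite ifN ?flipK ?xorvK; last by lia.
split=> //; apply/andP; split=> //; lia.
Qed.

Lemma card_supports_major_flip v j :
  #|[set p : 'rV_t | supports_major v p && ~~ p ord0 j]| + v j * #|tight_at j|
  <= #|[set p : 'rV_t | supports_major v p && p ord0 j]|.
Proof.
case: (boolP (v j)) => [vjY | vjN]; first by rewrite mul1n card_supports_major_Y.
by rewrite mul0n addn0 card_supports_major_N.
Qed.

Lemma card_major_flip j :
  #|[set p : 'rV_t | (m < md p) && p ord0 j]|
  <= #|tight_at j| + #|[set p : 'rV_t | (m < md p) && ~~ p ord0 j]|.
Proof.
pose B := [set p : 'rV_t | (m.+1 < md p) && p ord0 j].
have sub_tight_B : [set p : 'rV_t | (m < md p) && p ord0 j] \subset tight_at j :|: B.
  apply/subsetP => p; rewrite !inE => /andP [mY ->].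
  by rewrite /=; lia.
apply: leq_trans (subset_leq_card sub_tight_B) _.
apply: leq_trans (leq_card_setU _ _).1 _; rewrite leq_add2l.
apply: (leq_card_can (f := flip j) (g := flip j)) => p; rewrite !inE => /andP [mY pjY].
rewrite flipK flip_at pjY /=; split=> //; have := md_flip_Y pjY; lia.
Qed.

Lemma nays_lt_md p : m < md p -> nays p < md p.
Proof. by have := md_add_nays p; lia. Qed.

Section Voters.
Variables (n : nat) (V : 'M[bool]_(n, t)).

Local Notation backers p := #|[set i | supports_major (V i) p]|.

Lemma supports_majorE i p : supports_major (V i) p = (m < md p) && supports V i p.
Proof.
rewrite /supports_major /supports /hamming_row -/(ham (V i) p); congr (_ && _).
by apply/idP/idP; lia.
Qed.

Lemma sum_backers_balance :
  \sum_j colY V j * #|tight_at j| + \sum_p backers p * nays p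
  <= \sum_p backers p * md p.
Proof.
have -> : \sum_j colY V j * #|tight_at j| = \sum_i \sum_j V i j * #|tight_at j|.
  rewrite exchange_big; apply: eq_bigr => j _.
  rewrite /colY -sum_nat_cond_const big_mkcond; apply: eq_bigr => i _.
  by case: (V i j); rewrite ?mul1n ?mul0n.
rewrite /majority_decisions !sum_card_mul_exchange -big_split; apply: leq_sum => i _.
rewrite -big_split; apply: leq_sum => j _.
by apply: leq_trans (card_supports_major_flip (V i) j); rewrite addnC.
Qed.

Lemma sum_major_md :
  \sum_(p : 'rV_t | m < md p) md p
  <= \sum_j #|tight_at j| + \sum_(p : 'rV_t | m < md p) nays p.
Proof.
rewrite (sum_card_exchange _ (fun p k => p ord0 k) : _ = \sum_j _).
rewrite (sum_card_exchange _ (fun p k => ~~ p ord0 k) : _ = \sum_j _) -big_split.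
by apply: leq_sum => j _; exact: card_major_flip.
Qed.

Lemma sum_backers_unsupported :
  (forall p, m < md p -> ~~ supported V p) ->
  2 * \sum_p backers p * md p + n.-1 * \sum_(p : 'rV_t | m < md p) nays p
  <= 2 * \sum_p backers p * nays p + n.-1 * \sum_(p : 'rV_t | m < md p) md p.
Proof.
move=> unsupported; rewrite !big_distrr !(big_mkcond (fun p => m < md p)) -!big_split /=.
apply: leq_sum => p _.
have [mY | Ym] := ltnP m (md p); last first.
  have -> : backers p = 0.
    apply/eqP; rewrite cards_eq0; apply/eqP/setP => i.
    by rewrite !inE supports_majorE ltnNge Ym.
  by rewrite !muln0.
have -> : backers p = #|[set i | supports V i p]|.
  by apply: eq_card => i; rewrite !inE supports_majorE mY.
have := unsupported p mY; rewrite /supported -ltnNge => few_backers.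
rewrite !mulnA; apply: leq_rearrange; last exact: ltnW (nays_lt_md mY).
by rewrite -ltnS (ltn_predK few_backers).
Qed.

Lemma sum_major_nays_lt_md :
  \sum_(p : 'rV_t | m < md p) nays p < \sum_(p : 'rV_t | m < md p) md p.
Proof.
pose yes_all : 'rV[bool]_t := const_mx true.
have major_all : m < md yes_all.
  rewrite /majority_decisions (eq_card (B := 'I_t)) ?card_ord; first lia.
  by move=> k; rewrite !inE mxE.
rewrite (bigD1 yes_all major_all) [X in _ < X](bigD1 yes_all major_all) /=.
rewrite -addSn leq_add ?nays_lt_md //.
by apply: leq_sum => p /andP [mY _]; exact: ltnW (nays_lt_md mY).
Qed.

Lemma exists_supported_major : voter_matrix V -> exists2 p, supported V p & m < md p.
Proof.
move=> [n_gt0 colV].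
have [p /andP [pV mY] | unsupported] := pickP (fun p => supported V p && (m < md p)).
  by exists p.
have /sum_backers_unsupported : forall p, m < md p -> ~~ supported V p.
  by move=> p mY; have := unsupported p; rewrite mY andbT => ->.
have tight_colY : n * \sum_j #|tight_at j| <= 2 * \sum_j colY V j * #|tight_at j|.
  by rewrite !big_distrr; apply: leq_sum => j _; rewrite /= mulnA leq_mul2r colV orbT.
(* With T := \sum_j #|tight_at j|, K := \sum_j colY V j * #|tight_at j|, W the
   backer-weighted excess of Y's over N's, and SY, SN the numbers of Y's and
   N's summed over major proposals:
   n T <= 2 K <= 2 W <= (n-1) (SY - SN) <= (n-1) T, while SN < SY. *)
have := sum_backers_balance; have := sum_major_md; have := sum_major_nays_lt_md.
nia.
Qed.

End Voters.

End OddTopics.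

Section DropTopic.
Variables (n t : nat) (V : 'M[bool]_(n, t.+1)).

Definition behead_topics : 'M[bool]_(n, t) := \matrix_(i, k) V i (lift ord0 k).

Definition cons_topic (b : bool) (p : 'rV[bool]_t) : 'rV[bool]_t.+1 :=
  \row_k (if unlift ord0 k is Some k' then p ord0 k' else b).

Lemma cons_topic0 b p : cons_topic b p ord0 ord0 = b.
Proof. by rewrite mxE unlift_none. Qed.

Lemma cons_topic_lift b p k : cons_topic b p ord0 (lift ord0 k) = p ord0 k.
Proof. by rewrite mxE liftK. Qed.

Lemma md_cons_topic_true p : md (cons_topic true p) = (md p).+1.
Proof.
rewrite /majority_decisions card_lift0 cons_topic0 add1n; congr _.+1.
by apply: eq_card => k; rewrite !inE cons_topic_lift.
Qed.

Lemma hamming_row_cons_topic i b p :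
  hamming_row V i (cons_topic b p) = (V i ord0 != b) + hamming_row behead_topics i p.
Proof.
rewrite /hamming_row card_lift0 cons_topic0; congr (_ + _).
by apply: eq_card => k; rewrite !inE cons_topic_lift mxE.
Qed.

Lemma voter_matrix_behead : voter_matrix V -> voter_matrix behead_topics.
Proof.
move=> [n_gt0 colV]; split=> // k; apply: leq_trans (colV (lift ord0 k)) _.
by rewrite leq_mul2l subset_leq_card ?orbT //; apply/subsetP => i; rewrite !inE mxE.
Qed.

Lemma supported_cons_topic_true p :
  odd t -> supported behead_topics p -> supported V (cons_topic true p).
Proof.
move=> t_odd pV; apply: leq_trans pV _; rewrite leq_mul2l subset_leq_card ?orbT //.
apply/subsetP => i; rewrite !inE /supports hamming_row_cons_topic.
have := odd_double_half t; rewrite t_odd /=; case: (V i ord0 != true) => /=; lia.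
Qed.

End DropTopic.

Lemma pos_odd_or_even t : 0 < t -> exists m, t = m.*2.+1 \/ t = m.*2.+2.
Proof. by move=> t_gt0; exists t.-1./2; have := odd_double_half t.-1; case: odd => /=; lia. Qed.

Theorem theorem4p6 (t : nat) (ht : (0 < t)%N) (n : nat) (V : 'M[bool]_(n, t)) :
  voter_matrix V ->
  exists p : 'rV[bool]_t, supported V p /\ ((t + 2) %/ 2 <= majority_decisions p)%N.
Proof.
move=> VV; have [m [t_odd | t_even]] := pos_odd_or_even ht; subst t.
  have [p pV mY] := exists_supported_major VV.
  by exists p; split=> //; lia.
have [p pV mY] := exists_supported_major (voter_matrix_behead VV).
exists (cons_topic true p); split.
  by apply: supported_cons_topic_true pV; rewrite /= odd_double.
rewrite md_cons_topic_true; lia.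
Qed.
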